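(* Let $f:\mathbb{R}^n\to\mathbb{R}$ be twice continuously differentiable with $\nabla^2 f$ Lipschitz continuous with constant $L$. Let $x\in\mathbb{R}^n$, let $y^1,\dots,y^p\in\mathbb{R}^n$, let $v\in\mathbb{R}^n$ and $w=\nabla^2 f(x)v$, and suppose $p+n=\frac{n^2+n}{2}$. Parametrize a symmetric matrix $H=(h_{ij})$ by the vector $\alpha\in\mathbb{R}^{n(n+1)/2}$ of its entries $h_{ij}$, $i\le j$ (the coefficients of $\tfrac12 s^\top H s$ in the monomial basis $\{\tfrac12 s_i^2\}_{i}\cup\{s_is_j\}_{i<j}$). Let $M=\begin{bmatrix}M^1\\ M^2\end{bmatrix}$ be the square matrix of the linear map $\alpha\mapsto\big(\tfrac12 (y^1-x)^\top H(y^1-x),\dots,\tfrac12 (y^p-x)^\top H(y^p-x),\,Hv\big)$, where $M^1$ consists of the first $p$ rows and $M^2$ of the last $n$ rows, and let $$\delta=\begin{bmatrix}\big(f(y^\ell)-f(x)-\nabla f(x)^\top(y^\ell-x)\big)_{\ell=1,\dots,p}\\ w\end{bmatrix}.$$ Assume $M$ is nonsingular and let $H$ be the symmetric matrix whose parameter vector $\alpha$ solves $M\alpha=\delta$. Let $\Delta_y=\max_{1\le\ell\le p}\|y^\ell-x\|$ and let $\hat M=\begin{bmatrix}M^1/\Delta_y^2\\ M^2\end{bmatrix}$ (assumed nonsingular). Then $$\|H-\nabla^2 f(x)\|=\mathcal{O}(\Delta_y),$$ i.e. $\|H-\nabla^2 f(x)\|\le \kappa\,\Delta_y$ where the constant $\kappa$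 depends only on $L$, the dimensions, and $\|\hat M^{-1}\|$. (Thus $H$ together with $\nabla f(x)$ gives a fully quadratic model.)
   Context: $\mathcal{O}(A)$ denotes a constant times $A$, where the constant is independent of $A$. Norms are Euclidean (spectral for matrices). *)

From HB Require Import structures.
From mathcomp Require Import all_boot all_order all_algebra.
From mathcomp Require Import all_classical all_reals all_analysis.
Set Implicit Arguments. Unset Strict Implicit. Unset Printing Implicit Defensive.
Import Order.TTheory GRing.Theory Num.Theory.
Import numFieldNormedType.Exports.
Local Open Scope classical_set_scope.
Local Open Scope ring_scope.

Definition vnorm {R : realType} {k : nat} (u : 'cV[R]_k) : R :=
  Num.sqrt (\sum_(i < k) u i 0 ^+ 2).

Definition specnorm {R : realType} {m k : nat} (A : 'M[R]_(m, k)) : R :=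
  sup [set vnorm (A *m u) | u in [set u : 'cV[R]_k | vnorm u <= 1]].

Definition pairT (n : nat) := {ij : 'I_n * 'I_n | (ij.1 <= ij.2)%N}.

Definition npar (n : nat) : nat := #|{: pairT n}|.

Definition pidx (n : nat) (k : 'I_(npar n)) : 'I_n * 'I_n :=
  val (@enum_val (pairT n) (mem predT) k).

(* symmetric matrix H with h_ij = h_ji = alpha_(min i j, max i j) *)
Definition Hof {R : realType} {n : nat} (alpha : 'cV[R]_(npar n)) : 'M[R]_n :=
  \matrix_(i < n, j < n)
     \sum_(k < npar n | (pidx k == (i, j)) || (pidx k == (j, i))) alpha k 0.

Definition Lmap {R : realType} {n p : nat} (x : 'rV[R]_n) (y : 'I_p -> 'rV[R]_n)
  (v : 'rV[R]_n) (alpha : 'cV[R]_(npar n)) : 'cV[R]_(p + n) :=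
  col_mx (\col_(l < p) (2^-1 * (((y l - x) *m Hof alpha *m (y l - x)^T) 0 0)))
         (Hof alpha *m v^T).

Definition Mmat {R : realType} {n p : nat} (x : 'rV[R]_n) (y : 'I_p -> 'rV[R]_n)
  (v : 'rV[R]_n) : 'M[R]_(p + n, npar n) :=
  \matrix_(r, k) Lmap x y v (delta_mx k 0) r 0.

Definition Deltay {R : realType} {n p : nat} (x : 'rV[R]_n) (y : 'I_p -> 'rV[R]_n) : R :=
  \big[Num.max/0]_(l < p) vnorm (y l - x)^T.

Definition Mhat {R : realType} {n p : nat} (x : 'rV[R]_n) (y : 'I_p -> 'rV[R]_n)
  (v : 'rV[R]_n) : 'M[R]_(p + n, npar n) :=
  col_mx ((Deltay x y ^+ 2)^-1 *: usubmx (Mmat x y v)) (dsubmx (Mmat x y v)).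

Definition rhs {R : realType} {n p : nat} (f : 'rV[R]_n -> R) (g : 'rV[R]_n -> 'rV[R]_n)
  (Hs : 'rV[R]_n -> 'M[R]_n) (x : 'rV[R]_n) (y : 'I_p -> 'rV[R]_n) (v : 'rV[R]_n)
  : 'cV[R]_(p + n) :=
  col_mx (\col_(l < p) (f (y l) - f x - (g x *m (y l - x)^T) 0 0))
         (Hs x *m v^T).

From HB Require Import structures.
From mathcomp Require Import all_boot all_order all_algebra.
From mathcomp Require Import all_classical all_reals all_analysis.
From mathcomp Require Import ring lra.
Set Implicit Arguments. Unset Strict Implicit. Unset Printing Implicit Defensive.
Import Order.TTheory GRing.Theory Num.Theory.
Import numFieldNormedType.Exports.
Local Open Scope classical_set_scope.
Local Open Scope ring_scope.

(* The vector a0 of upper-triangular entries of the Hessian S = Hs x reproduces S,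
   because S is symmetric: by the mean value theorem the second difference
   f(z+h+k) - f(z+h) - f(z+k) + f(z), which is symmetric in h and k, equals h S k^T
   up to O(L |h| |k| (|h| + |k|)).  Hence M (alpha - a0) = (r, 0), where r_l is the
   second-order Taylor remainder of f at y_l, of size at most n L |y_l - x|^3.
   Scaling the first p rows by Delta_y^-2 gives Mhat (alpha - a0) = (r / Delta_y^2, 0),
   of norm at most p n L Delta_y, so |alpha - a0| <= |Mhat^-1| p n L Delta_y; and every
   entry of H - S = Hof (alpha - a0) is an entry of alpha - a0. *)

Section Norms.
Variable R : realType.

Lemma vnorm_ge0 k (u : 'cV[R]_k) : 0 <= vnorm u.
Proof. exact: sqrtr_ge0. Qed.

Lemma vnorm0 k : vnorm (0 : 'cV[R]_k) = 0.
Proof. by rewrite /vnorm big1 ?sqrtr0 // => i _; rewrite mxE expr0n. Qed.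

Lemma vnormZ k (c : R) (u : 'cV[R]_k) : vnorm (c *: u) = `|c| * vnorm u.
Proof.
rewrite /vnorm -sqrtr_sqr -sqrtrM ?sqr_ge0 // mulr_sumr.
by congr Num.sqrt; apply: eq_bigr => i _; rewrite mxE exprMn.
Qed.

Lemma coord_le_vnorm k (u : 'cV[R]_k) i : `|u i 0| <= vnorm u.
Proof.
rewrite -sqrtr_sqr ler_sqrt; last by apply: sumr_ge0 => j _; exact: sqr_ge0.
by rewrite (bigD1 i) //= lerDl sumr_ge0 // => j _; exact: sqr_ge0.
Qed.

Lemma vnorm_eq0 k (u : 'cV[R]_k) : vnorm u = 0 -> u = 0.
Proof.
move=> u0; apply/matrixP => i j; rewrite (ord1 j) mxE.
by apply/normr0_eq0/le_anti; rewrite normr_ge0 andbT -u0 coord_le_vnorm.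
Qed.

Lemma vnorm_le_sum k (u : 'cV[R]_k) : vnorm u <= \sum_i `|u i 0|.
Proof.
have sum_ge0 : 0 <= \sum_i `|u i 0| by apply: sumr_ge0 => i _.
rewrite /vnorm -(ger0_norm sum_ge0) -sqrtr_sqr ler_sqrt ?sqr_ge0 //.
rewrite expr2 mulr_suml; apply: ler_sum => i _.
rewrite -real_normK ?num_real // expr2 ler_wpM2l //.
by rewrite (bigD1 i) //= lerDl sumr_ge0.
Qed.

Lemma vnorm_col_mx0 k l (u : 'cV[R]_k) : vnorm (col_mx u (0 : 'cV[R]_l)) = vnorm u.
Proof.
rewrite /vnorm big_split_ord /= [X in _ + X]big1 ?addr0 => [|i _].
  by congr Num.sqrt; apply: eq_bigr => i _; rewrite col_mxEu.
by rewrite col_mxEd mxE expr0n.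
Qed.

Let spec_set m k (A : 'M[R]_(m, k)) :=
  [set vnorm (A *m u) | u in [set u : 'cV[R]_k | vnorm u <= 1]].

Let spec_set_ub m k (A : 'M[R]_(m, k)) : ubound (spec_set A) (\sum_i \sum_j `|A i j|).
Proof.
move=> _ [u u1 <-]; apply: le_trans (vnorm_le_sum _) _; apply: ler_sum => i _.
rewrite mxE; apply: le_trans (ler_norm_sum _ _ _) _; apply: ler_sum => j _.
rewrite normrM -[leRHS]mulr1 ler_wpM2l //.
exact: le_trans (coord_le_vnorm _ _) u1.
Qed.

Let has_sup_spec_set m k (A : 'M[R]_(m, k)) : has_sup (spec_set A).
Proof.
split; first by exists 0, 0; rewrite /= ?vnorm0 ?ler01 // mulmx0 vnorm0.
by exists (\sum_i \sum_j `|A i j|); exact: spec_set_ub.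
Qed.

Lemma specnorm_le_sum m k (A : 'M[R]_(m, k)) : specnorm A <= \sum_i \sum_j `|A i j|.
Proof. by apply: ge_sup; [case: (has_sup_spec_set A) | exact: spec_set_ub]. Qed.

Lemma vnorm_mulmx_le m k (A : 'M[R]_(m, k)) u : vnorm (A *m u) <= specnorm A * vnorm u.
Proof.
have [u0|u_neq0] := eqVneq u 0; first by rewrite u0 mulmx0 !vnorm0 mulr0.
have u_gt0 : 0 < vnorm u.
  by rewrite lt_def vnorm_ge0 andbT; apply: contra_neq u_neq0; exact: vnorm_eq0.
have unit_le : vnorm (A *m ((vnorm u)^-1 *: u)) <= specnorm A.
  apply: sup_upper_bound (has_sup_spec_set A) _ _; exists ((vnorm u)^-1 *: u) => //=.
  by rewrite vnormZ ger0_norm ?invr_ge0 ?vnorm_ge0 // mulVf ?gt_eqF.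
move: unit_le; rewrite -scalemxAr vnormZ ger0_norm ?invr_ge0 ?vnorm_ge0 //.
by rewrite ler_pdivrMl // mulrC.
Qed.

Lemma specnorm_ge0 m k (A : 'M[R]_(m, k)) : 0 <= specnorm A.
Proof.
apply: le_trans (vnorm_ge0 (A *m 0)) _; apply: sup_upper_bound (has_sup_spec_set A) _ _.
by exists 0; rewrite /= ?vnorm0 ?ler01.
Qed.

End Norms.

Local Notation rnorm a := (vnorm a^T).

Section Bilinear.
Variables (R : realType) (n : nat).
Implicit Types (a b : 'rV[R]_n) (A B : 'M[R]_n).

Lemma rnormZ (c : R) a : rnorm (c *: a) = `|c| * rnorm a.
Proof. by rewrite linearZ vnormZ. Qed.

Lemma rnorm_delta (c : R) (i : 'I_n) : 0 <= c -> rnorm (c *: delta_mx 0 i : 'rV_n) = c.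
Proof.
move=> c0; rewrite rnormZ ger0_norm // trmx_delta /vnorm (bigD1 i) //= big1.
  by rewrite !mxE !eqxx expr1n addr0 sqrtr1 mulr1.
by move=> j ji; rewrite !mxE (negbTE ji) expr0n.
Qed.

Lemma dotC a b : (a *m b^T) 0 0 = (b *m a^T) 0 0.
Proof. by rewrite -[b *m a^T]trmxK trmx_mul !trmxK [RHS]mxE. Qed.

Lemma dot_le a b : `|(a *m b^T) 0 0| <= n%:R * rnorm a * rnorm b.
Proof.
rewrite mxE; apply: le_trans (ler_norm_sum _ _ _) _.
apply: le_trans (_ : \sum_(j < n) rnorm a * rnorm b <= _).
  2: by rewrite sumr_const card_ord -mulrA mulr_natl.
apply: ler_sum => j _.
rewrite normrM; apply: ler_pM => //.
  by have := coord_le_vnorm a^T j; rewrite mxE.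
by have := coord_le_vnorm b^T j; rewrite !mxE.
Qed.

Lemma quad_le a A b : `|(a *m A *m b^T) 0 0| <= n%:R * rnorm a * specnorm A * rnorm b.
Proof.
rewrite -mulmxA -[A *m b^T]trmxK; apply: le_trans (dot_le _ _) _.
rewrite -!mulrA ler_wpM2l // ler_wpM2l ?vnorm_ge0 // trmxK.
exact: vnorm_mulmx_le.
Qed.

Lemma quadP (c : R) a A B b :
  (a *m (c *: A + B) *m b^T) 0 0 = c * (a *m A *m b^T) 0 0 + (a *m B *m b^T) 0 0.
Proof. by rewrite mulmxDr mulmxDl -scalemxAr -scalemxAl [LHS]mxE [X in X + _]mxE. Qed.

Lemma quadB a A B b :
  (a *m (A - B) *m b^T) 0 0 = (a *m A *m b^T) 0 0 - (a *m B *m b^T) 0 0.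
Proof. by rewrite mulmxBr mulmxBl [LHS]mxE [X in _ + X]mxE. Qed.

Lemma quad_delta (c : R) A (i j : 'I_n) :
  ((c *: delta_mx 0 i : 'rV_n) *m A *m (c *: delta_mx 0 j : 'rV_n)^T) 0 0 = c ^+ 2 * A i j.
Proof.
rewrite linearZ /= -!scalemxAl -scalemxAr trmx_delta mxE mxE -rowE -colE.
by rewrite !mxE mulrA expr2.
Qed.

End Bilinear.

Section Derivatives.
Variable R : realType.

Lemma is_derive_mulr_cst (q t : R) : is_derive t 1 (fun u : R => u * q) q.
Proof.
apply: is_derive_eq (is_deriveM (is_derive_id t 1) (is_derive_cst q t 1)) _.
by rewrite scaler0 add0r; exact: mulr1.
Qed.

Lemma is_derive_sqr_cst (q t : R) : is_derive t 1 (fun u : R => u ^+ 2 * q) (2 * t * q).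
Proof.
apply: is_derive_eq (is_deriveM (is_deriveX 2 (is_derive_id t 1)) (is_derive_cst q t 1)) _.
rewrite scaler0 add0r; change (q * (2 * t ^+ 1 * 1) = 2 * t * q).
by rewrite expr1 mulr1 mulrC.
Qed.

Lemma is_derive_line (V W : normedModType R) (F : V -> W) (z s : V) (t : R) :
  differentiable F (z + t *: s) ->
  is_derive t 1 (fun u : R => F (z + u *: s)) ('d F (z + t *: s) s).
Proof.
move=> dF.
have quotE : (fun h : R => h^-1 *: (((fun u => F (z + u *: s)) \o shift t) (h *: 1)
                                    - F (z + t *: s)))
    = (fun h : R => h^-1 *: ((F \o shift (z + t *: s)) (h *: s) - F (z + t *: s))).
  apply/funext => h /=; congr (_ *: (F _ - _)).
  by rewrite [h%:A]mulr1 scalerDl addrCA.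
split; first by rewrite /derivable quotE; exact: (@diff_derivable _ _ _ _ _ s dF).
by rewrite /derive quotE -deriveE.
Qed.

Lemma is_derive_dot n (G : R -> 'rV[R]_n) (t : R) (D w : 'rV[R]_n) :
  is_derive t 1 G D -> is_derive t 1 (fun u => (G u *m w^T) 0 0) ((D *m w^T) 0 0).
Proof.
move=> [dG DG].
have coord_derive j : is_derive t 1 (fun u => G u 0 j) (D 0 j).
  split; first by move/derivable_mxP: dG; apply.
  by have := derive_mx dG; rewrite DG => ->; rewrite mxE.
have -> : (fun u => (G u *m w^T) 0 0) = \sum_(j < n) (w 0 j *: (fun u => G u 0 j)).
  apply/funext => u; rewrite fct_sumE mxE; apply: eq_bigr => j _.
  by rewrite !mxE mulrC.
apply: is_derive_eq (is_derive_sum (fun j => is_deriveZ (w 0 j) (coord_derive j))) _.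
by rewrite mxE; apply: eq_bigr => j _; rewrite mxE mulrC.
Qed.

Lemma MVT01 (phi dphi : R -> R) : (forall t : R, is_derive t 1 phi (dphi t)) ->
  exists2 c, 0 < c < 1 & phi 1 - phi 0 = dphi c.
Proof.
move=> phi_dphi.
have phi_cont : {within `[0, 1], continuous phi}.
  by apply: derivable_within_continuous => t _; exact: ex_derive.
have [c c01 E] := MVT ltr01 (fun t _ => phi_dphi t) phi_cont.
by exists c; [rewrite in_itv /= in c01 | rewrite E subr0 mulr1].
Qed.

End Derivatives.

Section Taylor.
Variables (R : realType) (n : nat) (f : 'rV[R]_n -> R) (g : 'rV[R]_n -> 'rV[R]_n)
  (Hs : 'rV[R]_n -> 'M[R]_n) (L : R).
Implicit Types (z s w h k : 'rV[R]_n).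
Hypotheses (f_diff : forall z, differentiable f z)
  (df_grad : forall z h, 'd f z h = (g z *m h^T) 0 0)
  (g_diff : forall z, differentiable g z)
  (dg_hess : forall z h, 'd g z h = (Hs z *m h^T)^T)
  (Hs_lip : forall a b, specnorm (Hs a - Hs b) <= L * vnorm (a - b)^T).

Lemma is_derive_f_line z s (t : R) :
  is_derive t 1 (fun u => f (z + u *: s)) ((g (z + t *: s) *m s^T) 0 0).
Proof. by rewrite -df_grad; exact: is_derive_line. Qed.

Lemma is_derive_g_line z s w (t : R) :
  is_derive t 1 (fun u => (g (z + u *: s) *m w^T) 0 0) ((w *m Hs (z + t *: s) *m s^T) 0 0).
Proof.
have := is_derive_dot w (is_derive_line (g_diff (z + t *: s))).
by rewrite dg_hess dotC trmxK mulmxA.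
Qed.

Lemma hessian_lip_segment z s (c : R) : 0 <= c <= 1 ->
  specnorm (Hs (z + c *: s) - Hs z) <= `|L| * rnorm s.
Proof.
move=> /andP[c_ge0 c_le1]; apply: le_trans (Hs_lip _ _) _.
rewrite addrAC subrr add0r rnormZ ger0_norm //.
have cs_ge0 : 0 <= c * rnorm s by rewrite mulr_ge0 ?vnorm_ge0.
apply: le_trans (ler_wpM2r cs_ge0 (ler_norm L)) _.
by rewrite ler_wpM2l // ler_piMl ?vnorm_ge0.
Qed.

Lemma grad_taylor_le z s w :
  `|(g (z + s) *m w^T) 0 0 - (g z *m w^T) 0 0 - (w *m Hs z *m s^T) 0 0|
    <= n%:R * `|L| * rnorm s ^+ 2 * rnorm w.
Proof.
set q := (w *m Hs z *m s^T) 0 0.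
have [c /andP[c_gt0 c_lt1] E] := MVT01 (fun t => is_deriveB (is_derive_g_line z s w t)
                                                        (is_derive_mulr_cst q t)).
move: E; rewrite !fctE /=  scale1r scale0r addr0 mul1r mul0r subr0 addrAC => ->.
rewrite /q -quadB; apply: le_trans (quad_le _ _ _) _.
have Hs_le : specnorm (Hs (z + c *: s) - Hs z) <= `|L| * rnorm s.
  by apply: hessian_lip_segment; rewrite !ltW.
have -> : n%:R * `|L| * rnorm s ^+ 2 * rnorm w = n%:R * rnorm w * (`|L| * rnorm s) * rnorm s.
  by rewrite expr2; ring.
by rewrite ler_wpM2r ?vnorm_ge0 // ler_wpM2l ?mulr_ge0 ?vnorm_ge0.
Qed.

Lemma taylor2_le z s :
  `|f (z + s) - f z - (g z *m s^T) 0 0 - 2^-1 * (s *m Hs z *m s^T) 0 0|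
    <= n%:R * `|L| * rnorm s ^+ 3.
Proof.
set a := (g z *m s^T) 0 0; set q := (s *m Hs z *m s^T) 0 0.
have [c /andP[c_gt0 c_lt1] E] := MVT01 (fun t => is_deriveB
  (is_deriveB (is_derive_f_line z s t) (is_derive_mulr_cst a t)) (is_derive_sqr_cst (2^-1 * q) t)).
move: E; rewrite !fctE /= scale1r scale0r addr0 mul1r mul0r expr1n mul1r expr0n mul0r !subr0 => E.
have -> : f (z + s) - f z - a - 2^-1 * q
         = (g (z + c *: s) *m s^T) 0 0 - a - (s *m Hs z *m (c *: s)^T) 0 0.
  have -> : (s *m Hs z *m (c *: s)^T) 0 0 = c * q by rewrite linearZ /= -scalemxAr mxE.
  by lra.
apply: le_trans (grad_taylor_le _ _ _) _.
have cube_le : (c * rnorm s) ^+ 2 * rnorm s <= rnorm s ^+ 3.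
  rewrite exprMn -mulrA -exprSr ler_piMl ?exprn_ge0 ?vnorm_ge0 //.
  by rewrite exprn_ile1 ?ltW.
by rewrite rnormZ (gtr0_norm c_gt0) -mulrA ler_wpM2l ?mulr_ge0 ?ler0n.
Qed.

Lemma second_difference_le z h k :
  `|f (z + h + k) - f (z + h) - f (z + k) + f z - (h *m Hs z *m k^T) 0 0|
    <= n%:R * `|L| * (rnorm k ^+ 2 * rnorm h + rnorm h ^+ 2 * rnorm k).
Proof.
have [c /andP[c_gt0 c_lt1] E] := MVT01 (fun t =>
  is_deriveB (is_derive_f_line (z + k) h t) (is_derive_f_line z h t)).
move: E; rewrite !fctE /= !scale1r !scale0r !addr0 => E.
have -> : f (z + h + k) - f (z + h) - f (z + k) + f z - (h *m Hs z *m k^T) 0 0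
    = ((g (z + c *: h + k) *m h^T) 0 0 - (g (z + c *: h) *m h^T) 0 0
       - (h *m Hs (z + c *: h) *m k^T) 0 0)
      + (h *m (Hs (z + c *: h) - Hs z) *m k^T) 0 0.
  by rewrite quadB [z + c *: h + k]addrAC [z + h + k]addrAC; lra.
apply: le_trans (ler_normD _ _) _; rewrite mulrDr.
apply: lerD; rewrite mulrA; first exact: grad_taylor_le.
apply: le_trans (quad_le _ _ _) _.
have Hs_le : specnorm (Hs (z + c *: h) - Hs z) <= `|L| * rnorm h.
  by apply: hessian_lip_segment; rewrite !ltW.
have -> : n%:R * `|L| * rnorm h ^+ 2 * rnorm k = n%:R * rnorm h * (`|L| * rnorm h) * rnorm k.
  by rewrite expr2; ring.
by rewrite ler_wpM2r ?vnorm_ge0 // ler_wpM2l ?mulr_ge0 ?vnorm_ge0.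
Qed.

Lemma hessian_asym_le z i j e : 0 < e ->
  `|Hs z i j - Hs z j i| <= 4 * (n%:R * `|L|) * e.
Proof.
move=> e_gt0; set h : 'rV_n := e *: delta_mx 0 i; set k : 'rV_n := e *: delta_mx 0 j.
have e_ge0 := ltW e_gt0; have e2_gt0 := exprn_gt0 2 e_gt0.
have hk_le := second_difference_le z h k; have kh_le := second_difference_le z k h.
rewrite quad_delta !(rnorm_delta _ e_ge0) in hk_le.
rewrite quad_delta !(rnorm_delta _ e_ge0) [z + k + h]addrAC in kh_le.
rewrite [f (z + h + k) - _ - _]addrAC in kh_le.
set D := f (z + h + k) - f (z + h) - f (z + k) + f z in hk_le kh_le.
rewrite -(ler_pM2l e2_gt0) -{1}(gtr0_norm e2_gt0) -normrM mulrBr.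
apply: (le_trans (ler_distD D _ _)); rewrite distrC.
by apply: (le_trans (lerD hk_le kh_le)); lra.
Qed.

Lemma hessian_sym z i j : Hs z i j = Hs z j i.
Proof.
have C1_gt0 : 0 < 4 * (n%:R * `|L|) + 1 by rewrite ltr_wpDl ?mulr_ge0 ?ler0n.
apply/eqP; rewrite -subr_eq0 -normr_eq0 eq_le normr_ge0 andbT.
apply/ler_addgt0Pr => e e_gt0; rewrite add0r.
apply: le_trans (hessian_asym_le z i j (divr_gt0 e_gt0 C1_gt0)) _.
set C := 4 * _.
by rewrite mulrA ler_pdivrMr // mulrC ler_wpM2l ?(ltW e_gt0) // lerDl.
Qed.

End Taylor.

Section Parametrization.
Variables (R : realType) (n : nat).

Definition Hpar (S : 'M[R]_n) : 'cV[R]_(npar n) := \col_k S (pidx k).1 (pidx k).2.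

Lemma pidx_le (k : 'I_(npar n)) : ((pidx k).1 <= (pidx k).2)%N.
Proof. exact: (svalP (@enum_val (pairT n) (mem predT) k)). Qed.

Lemma pidx_inj : injective (@pidx n).
Proof. by move=> k k' /val_inj/enum_val_inj. Qed.

Lemma pidx_onto (i j : 'I_n) : (i <= j)%N -> exists k, pidx k = (i, j).
Proof.
move=> le_ij; have pT : (exist _ (i, j) le_ij : pairT n) \in mem predT by [].
by exists (enum_rank_in pT (exist _ (i, j) le_ij)); rewrite /pidx enum_rankK_in.
Qed.

Lemma HofE (alpha : 'cV[R]_(npar n)) k : Hof alpha (pidx k).1 (pidx k).2 = alpha k 0.
Proof.
case pk: (pidx k) => [i j] /=.
rewrite mxE (eq_bigl (pred1 k)) ?big_pred1_eq // => k' /=.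
apply/orP/eqP => [[] /eqP pk'|->]; last by rewrite pk eqxx; left.
  by apply: pidx_inj; rewrite pk pk'.
have := pidx_le k; have := pidx_le k'; rewrite pk pk' /= => le_ji le_ij.
have eq_ij : i = j by apply/val_inj/anti_leq; rewrite le_ij le_ji.
by apply: pidx_inj; rewrite pk pk' eq_ij.
Qed.

Lemma Hof_sym (alpha : 'cV[R]_(npar n)) (i j : 'I_n) : Hof alpha i j = Hof alpha j i.
Proof. by rewrite !mxE; apply: eq_bigl => k; rewrite orbC. Qed.

Lemma HofK (S : 'M[R]_n) : (forall i j, S i j = S j i) -> Hof (Hpar S) = S.
Proof.
move=> S_sym; apply/matrixP => i j.
wlog le_ij : i j / (i <= j)%N => [sym_case|].
  by case: (leqP i j) => [|/ltnW] /sym_case //; rewrite Hof_sym S_sym.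
have [k pk] := pidx_onto le_ij.
by have := HofE (Hpar S) k; rewrite [Hpar S k 0]mxE pk.
Qed.

End Parametrization.

Lemma Hof_is_linear (R : realType) n : linear (@Hof R n).
Proof.
move=> c a b; apply/matrixP => i j; rewrite !mxE.
by rewrite mulr_sumr -big_split; apply: eq_bigr => k _; rewrite !mxE.
Qed.

HB.instance Definition _ (R : realType) n :=
  GRing.isLinear.Build R 'cV[R]_(npar n) 'M[R]_n _ (@Hof R n) (@Hof_is_linear R n).

Lemma Lmap_is_linear (R : realType) n p (x : 'rV[R]_n) (y : 'I_p -> 'rV[R]_n) v :
  linear (Lmap x y v).
Proof.
move=> c a b; rewrite /Lmap linearP /= scale_col_mx add_col_mx mulmxDl -scalemxAl.
congr col_mx; apply/matrixP => l k.
rewrite [LHS]mxE [in RHS]mxE [X in _ = X + _]mxE [X in _ = c * X + _]mxE.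
rewrite [X in _ = _ + X]mxE quadP.
by rewrite mulrDr mulrCA.
Qed.

HB.instance Definition _ (R : realType) n p (x : 'rV[R]_n) (y : 'I_p -> 'rV[R]_n) v :=
  GRing.isLinear.Build R 'cV[R]_(npar n) 'cV[R]_(p + n) _ (Lmap x y v) (Lmap_is_linear x y v).

Lemma Mmat_mulmx (R : realType) n p (x : 'rV[R]_n) (y : 'I_p -> 'rV[R]_n) v a :
  Mmat x y v *m a = Lmap x y v a.
Proof.
have -> : a = \sum_(k < npar n) a k 0 *: delta_mx k 0.
  by rewrite {1}(matrix_sum_delta a); apply: eq_bigr => k _; rewrite big_ord1.
rewrite !linear_sum; apply: eq_bigr => k _; rewrite !linearZ /= -colE.
by congr (_ *: _); apply/matrixP => r j; rewrite (ord1 j) !mxE.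
Qed.

Lemma Hof_entry_le (R : realType) n (b : 'cV[R]_(npar n)) (i j : 'I_n) :
  `|Hof b i j| <= vnorm b.
Proof.
wlog le_ij : i j / (i <= j)%N => [sym_case|].
  by case: (leqP i j) => [|/ltnW] /sym_case //; rewrite Hof_sym.
have [k pk] := pidx_onto le_ij.
by have := HofE b k; rewrite pk /= => ->; exact: coord_le_vnorm.
Qed.

Lemma specnorm_Hof (R : realType) n (b : 'cV[R]_(npar n)) :
  specnorm (Hof b) <= (n * n)%:R * vnorm b.
Proof.
apply: le_trans (specnorm_le_sum _) _.
apply: le_trans (_ : \sum_(i < n) \sum_(j < n) vnorm b <= _).
  by apply: ler_sum => i _; apply: ler_sum => j _; exact: Hof_entry_le.
by rewrite sumr_const card_ord sumr_const card_ord -mulrnA mulr_natl.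
Qed.

Lemma scaled_cube_le (R : realType) (C r D e : R) : 0 <= C -> 0 <= r <= D ->
  `|e| <= C * r ^+ 3 -> `|(D ^+ 2)^-1 * e| <= C * D.
Proof.
move=> C_ge0 /andP[r_ge0 r_leD] e_le.
have [->|D_neq0] := eqVneq D 0; first by rewrite expr0n invr0 mul0r normr0 mulr0.
have D2_gt0 : 0 < D ^+ 2 by rewrite exprn_gt0 // lt_def D_neq0 (le_trans r_ge0).
rewrite normrM ger0_norm ?invr_ge0 ?sqr_ge0 // ler_pdivrMl // mulrCA -exprSr.
by apply: le_trans e_le _; rewrite ler_wpM2l // lerXn2r // nnegrE (le_trans r_ge0).
Qed.

Section ModelError.
Variables (R : realType) (n p : nat) (f : 'rV[R]_n -> R) (g : 'rV[R]_n -> 'rV[R]_n)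
  (Hs : 'rV[R]_n -> 'M[R]_n) (x : 'rV[R]_n) (y : 'I_p -> 'rV[R]_n) (v : 'rV[R]_n).

Definition taylor_rem : 'cV[R]_p :=
  \col_l (f (y l) - f x - (g x *m (y l - x)^T) 0 0
          - 2^-1 * ((y l - x) *m Hs x *m (y l - x)^T) 0 0).

Lemma rhs_subLmap a : Hof a = Hs x ->
  rhs f g Hs x y v - Lmap x y v a = col_mx taylor_rem 0.
Proof.
move=> Ha; rewrite /rhs /Lmap Ha opp_col_mx add_col_mx subrr.
by congr col_mx; apply/matrixP => l k; rewrite !mxE.
Qed.

Lemma Mhat_mulmx a : Mhat x y v *m a =
  col_mx ((Deltay x y ^+ 2)^-1 *: usubmx (Lmap x y v a)) (dsubmx (Lmap x y v a)).
Proof. by rewrite mul_col_mx -scalemxAl mul_usub_mx mul_dsub_mx Mmat_mulmx. Qed.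

Lemma vnorm_scaled_rem_le (C : R) : 0 <= C ->
    (forall l, `|taylor_rem l 0| <= C * rnorm (y l - x) ^+ 3) ->
  vnorm ((Deltay x y ^+ 2)^-1 *: taylor_rem) <= p%:R * (C * Deltay x y).
Proof.
move=> C_ge0 rem_le; apply: le_trans (vnorm_le_sum _) _.
apply: le_trans (_ : \sum_(l < p) C * Deltay x y <= _).
  2: by rewrite sumr_const card_ord mulr_natl.
apply: ler_sum => l _.
rewrite mxE; apply: scaled_cube_le (rem_le l) => //.
by rewrite vnorm_ge0; exact: le_bigmax.
Qed.

End ModelError.

Theorem theorem2 (R : realType) (n p : nat) :
  (p + n = (n ^ 2 + n) %/ 2)%N ->
  exists K : R -> R -> R,
  forall (f : 'rV[R]_n -> R) (g : 'rV[R]_n -> 'rV[R]_n) (Hs : 'rV[R]_n -> 'M[R]_n)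
         (L : R) (x : 'rV[R]_n) (y : 'I_p -> 'rV[R]_n) (v : 'rV[R]_n)
         (alpha : 'cV[R]_(npar n)) (Mhinv : 'M[R]_(npar n, p + n)),
    (* f is C^2 with gradient g and Hessian Hs *)
    (forall z, differentiable f z) ->
    (forall z h, 'd f z h = (g z *m h^T) 0 0) ->
    (forall z, differentiable g z) ->
    (forall z h, 'd g z h = (Hs z *m h^T)^T) ->
    continuous Hs ->
    (* the Hessian is L-Lipschitz *)
    (forall a b, specnorm (Hs a - Hs b) <= L * vnorm (a - b)^T) ->
    (* M nonsingular *)
    (exists Minv : 'M[R]_(npar n, p + n),
        Minv *m Mmat x y v = 1%:M /\ Mmat x y v *m Minv = 1%:M) ->
    (* alpha solves M alpha = delta *)
    Mmat x y v *m alpha = rhs f g Hs x y v ->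
    (* Mhat nonsingular, with inverse Mhinv *)
    Mhinv *m Mhat x y v = 1%:M -> Mhat x y v *m Mhinv = 1%:M ->
    specnorm (Hof alpha - Hs x) <= K L (specnorm Mhinv) * Deltay x y.
Proof.
move=> _; exists (fun L m => (n * n * p * n)%:R * `|L| * m).
move=> f g Hs L x y v alpha Mhinv f_diff df_grad g_diff dg_hess _ Hs_lip _ M_alpha Mhinv_l _.
set D := Deltay x y; set a0 := Hpar (Hs x).
have Ha0 : Hof a0 = Hs x by apply: HofK; exact: (hessian_sym f_diff df_grad g_diff dg_hess Hs_lip).
have Mhat_err : Mhat x y v *m (alpha - a0) = col_mx ((D ^+ 2)^-1 *: taylor_rem f g Hs x y) 0.
  by rewrite Mhat_mulmx linearB /= -Mmat_mulmx M_alpha rhs_subLmap // col_mxKu col_mxKd.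
have -> : Hof alpha - Hs x = Hof (Mhinv *m col_mx ((D ^+ 2)^-1 *: taylor_rem f g Hs x y) 0).
  by rewrite -Mhat_err mulmxA Mhinv_l mul1mx linearB /= Ha0.
have rem_le l : `|taylor_rem f g Hs x y l 0| <= n%:R * `|L| * rnorm (y l - x) ^+ 3.
  have := taylor2_le f_diff df_grad g_diff dg_hess Hs_lip x (y l - x).
  by rewrite [x + _]addrC subrK => taylor_le; rewrite /taylor_rem mxE.
have nL_ge0 : 0 <= n%:R * `|L| :> R by rewrite mulr_ge0 ?ler0n.
have rem_norm_le := vnorm_scaled_rem_le nL_ge0 rem_le.
have -> : (n * n * p * n)%:R * `|L| * specnorm Mhinv * D
    = (n * n)%:R * (specnorm Mhinv * (p%:R * (n%:R * `|L| * D))) by rewrite !natrM; ring.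
apply: (le_trans (specnorm_Hof _)); rewrite ler_wpM2l ?ler0n //.
apply: (le_trans (vnorm_mulmx_le _ _)); rewrite vnorm_col_mx0.
by rewrite ler_wpM2l ?specnorm_ge0.
Qed.
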